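(* Let $X$ be a finite set and $f\in\mathrm{Bool}(X)$ with $f(Y)\in\mathbb{N}$ for every $Y\subseteq X$. Then $\theta_1(f)$, defined by $\theta_1(f)(A)=\sum_{B\subseteq A}f(B)$, is rigid.
   Context: A boolean function on a finite set $X$ is a map $f:\mathcal{P}(X)\to\mathbb{Z}$ with $f(\emptyset)=0$; $\mathrm{Bool}(X)$ is their set; $f_{\mid Y}$ is the restriction to $\mathcal{P}(Y)$. For disjoint $X,Y$, $(f\star_1g)(A)=f(A\cap X)+g(A\cap Y)$. For nonempty $X$, $f$ is indecomposable if $f=f'\star_1f''$ with $f'\in\mathrm{Bool}(X\setminus Y)$, $f''\in\mathrm{Bool}(Y)$ forces $Y\in\{\emptyset,X\}$. Each $f$ determines a unique equivalence $\sim_f^i$ with $f=\prod^{\star_1}_{Y\in X/\sim_f^i}f_{\mid Y}$ and each $f_{\mid Y}$ indecomposable; its classes are the indecomposable components of $f$. An indecomposable $f\in\mathrm{Bool}(X)$ is rigid if for all disjoint $A,B\subseteq X$ with $f(A\sqcup B)=f(A)+f(B)$, one has $f(A'\sqcup B')=f(A')+f(B')$ for all $A'\subseteq A$, $B'\subseteq B$. A general $f\in\mathrm{Bool}(X)$ is rigid if $f_{\mid Y}$ is rigid for each indecomposable component $Y$ of $f$. *)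

From HB Require Import structures.
From mathcomp Require Import all_boot all_order all_algebra.
Set Implicit Arguments. Unset Strict Implicit. Unset Printing Implicit Defensive.
Import Order.TTheory GRing.Theory Num.Theory.
Local Open Scope ring_scope.

(* The finite set X is the carrier of a finType T; subsets of X are {set T}.
   A boolean function on X is f : {set T} -> int with f set0 = 0.
   For Y \subset X, the restriction f|Y is f considered only on subsets of Y;
   all definitions below relative to Y only evaluate f on subsets of Y. *)

Definition is_bool (T : finType) (f : {set T} -> int) : Prop := f set0 = 0.

(* g restricted to Y is indecomposable: Y nonempty, and whenever
   g|Y = f' *_1 f'' with f' in Bool(Y \ Z), f'' in Bool(Z), Z \subset Y,
   then Z = set0 or Z = Y. *)
Definition indecomposable_on (T : finType) (g : {set T} -> int) (Y : {set T})
  : Prop :=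
  Y != set0 /\
  forall Z : {set T}, Z \subset Y ->
    (exists (f' f'' : {set T} -> int),
        f' set0 = 0 /\ f'' set0 = 0 /\
        forall A : {set T}, A \subset Y ->
          g A = f' (A :&: (Y :\: Z)) + f'' (A :&: Z)) ->
    Z = set0 \/ Z = Y.

Definition rigid_on (T : finType) (g : {set T} -> int) (Y : {set T}) : Prop :=
  forall A B : {set T}, A \subset Y -> B \subset Y -> [disjoint A & B] ->
    g (A :|: B) = g A + g B ->
    forall A' B' : {set T}, A' \subset A -> B' \subset B ->
      g (A' :|: B') = g A' + g B'.

(* P is the partition of X (= [set: T]) into indecomposable components of f:
   f = prod^{*_1}_{Y in P} f|Y and each f|Y is indecomposable. *)
Definition indec_decomposition (T : finType) (f : {set T} -> int)
  (P : {set {set T}}) : Prop :=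
  partition P [set: T] /\
  (forall A : {set T}, f A = \sum_(Y in P) f (A :&: Y)) /\
  (forall Y, Y \in P -> indecomposable_on f Y).

(* f is rigid if f|Y is rigid for each indecomposable component Y of f.
   (The decomposition into indecomposable components is unique.) *)
Definition rigid (T : finType) (f : {set T} -> int) : Prop :=
  forall P : {set {set T}}, indec_decomposition f P ->
    forall Y, Y \in P -> rigid_on f Y.

Definition theta1 (T : finType) (f : {set T} -> int) : {set T} -> int :=
  fun A => \sum_(B in powerset A) f B.

From HB Require Import structures.
From mathcomp Require Import all_boot all_order all_algebra.
Import Order.TTheory GRing.Theory Num.Theory.
Local Open Scope ring_scope.

(* For disjoint A and B, theta1 f (A :|: B) exceeds theta1 f A + theta1 f B by
   the sum of f over the sets C contained in A :|: B that meet both A and B.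
   When f is nonnegative, additivity on (A, B) forces f to vanish on all these
   sets, and the sets crossing a pair A' \subset A, B' \subset B are among them. *)

Section CrossSum.

Variable T : finType.
Implicit Types A B C : {set T}.

Definition crosses A B C : bool :=
  [&& C \subset A :|: B, ~~ (C \subset A) & ~~ (C \subset B)].

Definition cross_sum (f : {set T} -> int) A B : int :=
  \sum_(C : {set T} | crosses A B C) f C.

Lemma theta1E (f : {set T} -> int) A :
  theta1 f A = \sum_(C : {set T} | C \subset A) f C.
Proof. by apply: eq_bigl => C; rewrite powersetE. Qed.

Lemma theta1_disjointU (f : {set T} -> int) A B :
  f set0 = 0 -> [disjoint A & B] ->
  theta1 f (A :|: B) = theta1 f A + theta1 f B + cross_sum f A B.
Proof.
move=> f0 dis.
have subB_subA C : C \subset B -> (C \subset A) = (C == set0).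
  move=> CB; apply/idP/eqP => [CA|->]; last exact: sub0set.
  by apply/eqP; rewrite -subset0 -(disjoint_setI0 dis) subsetI CA.
rewrite !theta1E (bigID (fun C : {set T} => C \subset A)) /= -addrA.
congr (_ + _).
  by apply: eq_bigl => C; rewrite andb_idl // => /subset_trans; apply; exact: subsetUl.
rewrite (bigID (fun C : {set T} => C \subset B)) /= [in RHS](bigD1 set0) ?sub0set //= f0 add0r.
congr (_ + _); last by apply: eq_bigl => C; rewrite /crosses andbA.
apply: eq_bigl => C; case CB: (C \subset B); last by rewrite !andbF.
by rewrite subB_subA // andbT (subset_trans CB (subsetUr _ _)).
Qed.

Lemma crossesW {A B A' B' C} : [disjoint A & B] ->
  A' \subset A -> B' \subset B -> crosses A' B' C -> crosses A B C.
Proof.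
have escapes (X Y X' Y' : {set T}) : [disjoint X & Y] -> X' \subset X ->
    C \subset X' :|: Y' -> ~~ (C \subset Y') -> ~~ (C \subset Y).
  move=> dXY sX CU /subsetPn [x xC xY']; apply/subsetPn; exists x => //.
  have xX' : x \in X' by move/subsetP/(_ x xC): CU; rewrite inE (negbTE xY') orbF.
  by rewrite (disjointFr dXY (subsetP sX x xX')).
move=> dis sA sB /and3P [CU nA nB]; apply/and3P; split.
- exact: subset_trans CU (setUSS sA sB).
- by apply: (escapes B A B' A'); rewrite 1?disjoint_sym 1?setUC.
- exact: (escapes A B A' B').
Qed.

Lemma cross_sum_eq0W {f : {set T} -> int} {A B A' B'} :
  (forall C, 0 <= f C) -> [disjoint A & B] ->
  A' \subset A -> B' \subset B ->
  cross_sum f A B = 0 -> cross_sum f A' B' = 0.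
Proof.
move=> f_ge0 dis sA sB /(psumr_eq0P (fun C _ => f_ge0 C)) f_cross0.
by apply: big1 => C /(crossesW dis sA sB); apply: f_cross0.
Qed.

Lemma theta1_rigid_on (f : {set T} -> int) (Y : {set T}) :
  f set0 = 0 -> (forall C, 0 <= f C) -> rigid_on (theta1 f) Y.
Proof.
move=> f0 f_ge0 A B _ _ dis addAB A' B' sA sB.
have dis' : [disjoint A' & B'] := disjointWl sA (disjointWr sB dis).
rewrite theta1_disjointU // -[RHS]addr0 in addAB.
move/addrI: addAB => cross0.
by rewrite theta1_disjointU // (cross_sum_eq0W f_ge0 dis sA sB cross0) addr0.
Qed.

End CrossSum.

Theorem proposition4p10 (T : finType) (f : {set T} -> int)
  (hf : is_bool f) (hnat : forall Y : {set T}, 0 <= f Y) :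
  rigid (theta1 f).
Proof. by move=> P _ Y _; apply: theta1_rigid_on. Qed.
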